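(* Assume the codebook is randomly generated so that all symbols of all codewords are i.i.d. according to some distribution $P$ on $\mathcal X$. Then for any threshold constants $t_1,t_2\in\mathbb R$, any asynchronism level $A\ge1$, any message $m$ and any $l\in\{1,\dots,A\}$, $$\sum_{m'\neq m}\ \sum_{n=1}^{A+N-1}\ \sum_{i=1}^{\min(N,n)}\mathbb P_{m,l}\big(E(m',n,i)\big)\le\big(M^{-(t_1+t_2-1)}A+M^{-(t_2-1)}\big)\,\mathrm{poly}(N).$$
   Context: Channel: finite input alphabet $\mathcal X$, finite output alphabet $\mathcal Y$, transition probabilities $Q(y|x)$, and a noise symbol $\star\in\mathcal X$. A codebook has $M$ codewords $C^N(m)=(C_1(m),\dots,C_N(m))\in\mathcal X^N$, $m=1,\dots,M$. Given the codebook, the message $m$ and the start time $\nu=l$, the outputs $Y_1,Y_2,\dots$ are independent with $Y_i\sim Q(\cdot|\star)$ if $i\le l-1$ or $i\ge l+N$, and $Y_i\sim Q(\cdot|C_{i-l+1}(m))$ for $l\le i\le l+N-1$; $\mathbb P_{m,l}$ is the joint probability over the random codebook and the outputs. Notation: for $j\ge i$, $x_i^j=(x_i,\dots,x_j)$ and $x^j=x_1^j$; $\hat P_{(x^n,y^n)}$ is the empirical joint distribution of a pair of sequences and $\hat P_{y^n}$ the empirical distribution of $y^n$; $I(J)$ is the mutual information of a joint distribution $J$ on $\mathcal X\times\mathcal Y$; $D$ is Kullback–Leibler divergence; logs are natural. For a message $m'$, time $n\ge1$, $i\in\{1,\dots,\min(N,n)\}$ and $k\in\{1,\dots,i\}$,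 $E(m',n,i,k)$ is the intersection of the events $$k\,I\big(\hat P_{(C^k(m'),Y_{n-i+1}^{n-i+k})}\big)+(i-k)\,I\big(\hat P_{(C_{k+1}^i(m'),Y_{n-i+k+1}^n)}\big)\ge t_2\ln M\quad\text{and}\quad i\,D\big(\hat P_{Y_{n-i+1}^n}\,\|\,Q(\cdot|\star)\big)\ge t_1\ln M$$ (a term with zero length, i.e. $(i-k)=0$, is taken to be $0$), and $E(m',n,i)=\bigcap_{k=1}^iE(m',n,i,k)$. $\mathrm{poly}(N)$ denotes a term growing no faster than polynomially in $N$. *)

From mathcomp Require Import all_boot all_order all_algebra.
From mathcomp Require Import all_classical all_reals all_analysis.
Set Implicit Arguments. Unset Strict Implicit. Unset Printing Implicit Defensive.
Import Order.TTheory GRing.Theory Num.Theory.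
Local Open Scope ring_scope.

Section Defs.
Variable R : realType.
Variables X Y : finType.

Definition is_distr (T : finType) (p : T -> R) :=
  (forall x, 0 <= p x) /\ \sum_(x : T) p x = 1.

Definition is_channel (Q : X -> Y -> R) := forall x, is_distr (Q x).

Definition emp (ys : seq Y) (y : Y) : R :=
  (count (pred1 y) ys)%:R / (size ys)%:R.

Definition emp2 (xs : seq X) (ys : seq Y) (x : X) (y : Y) : R :=
  (count (pred1 (x, y)) (zip xs ys))%:R / (size (zip xs ys))%:R.

Definition mutinf (J : X -> Y -> R) : R :=
  \sum_(x : X) \sum_(y : Y)
     (if J x y == 0 then 0
      else J x y * ln (J x y / ((\sum_(y' : Y) J x y') * (\sum_(x' : X) J x' y)))).

Definition KL (p q : Y -> R) : \bar R :=
  if [exists y, (0 < p y) && (q y == 0)] then +oo%E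
  else (\sum_(y : Y) (if p y == 0 then 0 else p y * ln (p y / q y)))%:E.

Variables (M N T : nat).

Definition codebook := {ffun 'I_M -> {ffun 'I_N -> X}}.
(* outputs Y_1 .. Y_T ; Y_t is stored at ordinal t-1 *)
Definition outputs := {ffun 'I_T -> Y}.

(* codeword symbol, 0-based index j (default star out of range, never used) *)
Definition cw (star : X) (c : codebook) (m : 'I_M) (j : nat) : X :=
  if insub j is Some o then c m o else star.

(* symbols C_{a+1} .. C_b of codeword m (1-based), i.e. 0-based a <= j < b *)
Definition cwin (c : codebook) (m : 'I_M) (a b : nat) : seq X :=
  map (fun j : 'I_N => c m j) (seq.filter (fun j : 'I_N => (a <= j < b)%N) (enum 'I_N)).

(* outputs Y_a .. Y_b (1-based, inclusive) *)
Definition ywin (y : outputs) (a b : nat) : seq Y :=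
  map (fun t : 'I_T => y t) (seq.filter (fun t : 'I_T => (a <= t.+1 <= b)%N) (enum 'I_T)).

(* channel input at (1-based) time s, given message m sent starting at l *)
Definition input (star : X) (c : codebook) (m : 'I_M) (l s : nat) : X :=
  if (l <= s < l + N)%N then cw star c m (s - l) else star.

(* joint probability weight of (codebook, outputs) under P_{m,l} *)
Definition weight (P : X -> R) (Q : X -> Y -> R) (star : X)
    (m : 'I_M) (l : nat) (c : codebook) (y : outputs) : R :=
  (\prod_(m0 : 'I_M) \prod_(j : 'I_N) P (c m0 j)) *
  \prod_(t : 'I_T) Q (input star c m l t.+1) (y t).

Definition Pml (P : X -> R) (Q : X -> Y -> R) (star : X) (m : 'I_M) (l : nat)
    (E : codebook -> outputs -> bool) : R :=
  \sum_(c : codebook) \sum_(y : outputs | E c y) weight P Q star m l c y.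

Definition Evk (Q : X -> Y -> R) (star : X) (t1 t2 : R) (m' : 'I_M)
    (n i k : nat) (c : codebook) (y : outputs) : bool :=
  [&& (k%:R * mutinf (emp2 (cwin c m' 0 k) (ywin y (n - i + 1) (n - i + k)))
       + (if (i - k)%N == 0%N then 0
          else (i - k)%:R *
               mutinf (emp2 (cwin c m' k i) (ywin y (n - i + k + 1) n)))
       >= t2 * ln (M%:R))
   & ((i%:R)%:E * KL (emp (ywin y (n - i + 1) n)) (Q star)
       >= (t1 * ln (M%:R))%:E)%E].

Definition Ev (Q : X -> Y -> R) (star : X) (t1 t2 : R) (m' : 'I_M)
    (n i : nat) (c : codebook) (y : outputs) : bool :=
  all (fun k => Evk Q star t1 t2 m' n i k c y) (iota 1 i).

End Defs.

(* Fix a false message m' and a window of length i ending at time n.  On the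
   event E(m',n,i) the product P^i(x) of the codeword prefix is at most
   exp(-i I(J)) V^i(x|y), where J is the joint type of the prefix x and the
   window outputs y and V(x|y) the conditional type; if moreover the window
   lies outside the transmission of m, the outputs are pure noise and also
   Q(.|star)^i(y) <= exp(-i D(J_Y || Q(.|star))) J_Y^i(y).  Replacing these
   factors of the true probability weight by the type-dependent kernels
   V and J_Y yields, for each joint type, a sub-probability; as there are at
   most (i+1)^|X x Y| joint types, P(E(m',n,i)) <= poly(N) M^-t2 in general
   and poly(N) M^-(t1+t2) for noise windows.  Only O(N) of the A+N-1 values
   of n give windows meeting the transmission, and summing over m', n, i
   gives the bound. *)

From mathcomp Require Import all_boot all_order all_algebra.
From mathcomp Require Import all_classical all_reals all_analysis.
From mathcomp Require Import ring lra zify.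
Set Implicit Arguments. Unset Strict Implicit. Unset Printing Implicit Defensive.
Import Order.TTheory GRing.Theory Num.Theory.
Local Open Scope ring_scope.

Lemma prod_expR_ln (R : realType) (T : eqType) (s : seq T) (f : T -> R) :
  (forall t, t \in s -> 0 < f t) -> \prod_(t <- s) f t = expR (\sum_(t <- s) ln (f t)).
Proof. by move=> f0; rewrite expR_sum; apply: eq_big_seq => t /f0 ft; rewrite lnK. Qed.

Lemma prod_eq0 (R : realType) (T : eqType) (s : seq T) (f : T -> R) :
  (forall t, 0 <= f t) -> ~~ all (fun t => 0 < f t) s -> \prod_(t <- s) f t = 0.
Proof.
move=> f0 /allPn [t ts ft]; rewrite (big_rem t) //=.
suff -> : f t = 0 by rewrite mul0r.
by apply/eqP; rewrite eq_le f0 andbT leNgt.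
Qed.

Section EmpiricalDistribution.
Variables (R : realType) (T : finType).

Lemma big_seq_count_mem (h : T -> R) (s : seq T) :
  \sum_(t <- s) h t = \sum_t (count_mem t s)%:R * h t.
Proof.
elim: s => [|z s IH]; first by rewrite big_nil big1 // => t _; rewrite mul0r.
rewrite big_cons IH.
under [RHS]eq_bigr => t _ do rewrite [count _ (_ :: _)]/= natrD mulrDl.
rewrite big_split /=; congr (_ + _).
rewrite (bigD1 z) //= eqxx mul1r big1 ?addr0 // => t /negPf.
by rewrite eq_sym => ->; rewrite mul0r.
Qed.

Lemma sum_count_mem (s : seq T) : \sum_t (count_mem t s)%:R = (size s)%:R :> R.
Proof.
rewrite -natr_sum; congr _%:R; elim: s => [|z s IH]; first by rewrite big1.
rewrite /= big_split /= IH (bigD1 z) //= eqxx big1 // => t /negPf.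
by rewrite eq_sym => ->.
Qed.

Lemma emp_ge0 (s : seq T) t : 0 <= emp R s t.
Proof. by rewrite divr_ge0. Qed.

Lemma sum_emp (s : seq T) : (0 < size s)%N -> \sum_t emp R s t = 1.
Proof. by move=> s0; rewrite -mulr_suml sum_count_mem divff // pnatr_eq0 -lt0n. Qed.

Lemma emp_gt0 (s : seq T) t : (0 < emp R s t) = (t \in s).
Proof.
have [s0|] := posnP (size s); first by move/size0nil: s0 => ->; rewrite /emp /= mul0r ltxx.
by move=> s0; rewrite pmulr_lgt0 ?invr_gt0 ?ltr0n // -has_count has_pred1.
Qed.

Definition relent (p q : T -> R) : R :=
  \sum_t (if p t == 0 then 0 else p t * ln (p t / q t)).

Lemma KL_relent (p q : T -> R) :
  (forall t, 0 < p t -> q t != 0) -> KL p q = (relent p q)%:E.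
Proof.
move=> pq; rewrite /KL; case: existsP => // -[t /andP [pt /eqP qt]].
by have := pq t pt; rewrite qt eqxx.
Qed.

Lemma relent_id (p : T -> R) : relent p p = 0.
Proof. by rewrite /relent big1 // => t _; case: eqP => // /eqP p0; rewrite divff // ln1 mulr0. Qed.

Lemma relent_ge0 (p q : T -> R) :
  (forall t, 0 <= p t) -> (forall t, 0 <= q t) -> (forall t, 0 < p t -> 0 < q t) ->
  \sum_t q t <= \sum_t p t -> 0 <= relent p q.
Proof.
move=> p0 q0 pq sq; rewrite -subr_ge0 in sq; apply: (le_trans sq).
rewrite -sumrB; apply: ler_sum => t _; case: eqP => [->|/eqP pt]; first by rewrite sub0r oppr_le0.
have {}pt : 0 < p t by rewrite lt_def pt p0.
have qt := pq t pt.
have ln_le : ln (q t / p t) <= q t / p t - 1.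
  by rewrite -[X in ln X](subrK 1) addrC le_ln1Dx // ltrBrDl subrr divr_gt0.
have -> : ln (p t / q t) = - ln (q t / p t) by rewrite !ln_div ?posrE // opprB.
have := ler_wpM2l (ltW pt) ln_le; rewrite mulrBr mulr1 mulrCA divff ?gt_eqF // mulr1; lra.
Qed.

Lemma sum_ln_emp (s : seq T) (q : T -> R) : (forall t, t \in s -> 0 < q t) ->
  \sum_(t <- s) (ln (emp R s t) - ln (q t)) = (size s)%:R * relent (emp R s) q.
Proof.
move=> qs; rewrite big_seq_count_mem /relent mulr_sumr; apply: eq_bigr => t _.
have [ct0|ct] := posnP (count_mem t s); first by rewrite /emp ct0 !mul0r eqxx mulr0.
have s0 : (0 < size s)%N by apply: leq_trans ct (count_size _ _).
have ts : t \in s by rewrite -has_pred1 has_count.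
have et : 0 < emp R s t by rewrite emp_gt0.
rewrite gt_eqF // ln_div ?posrE ?qs // mulrA /emp mulrCA divff ?mulr1 //.
by rewrite pnatr_eq0 -lt0n.
Qed.

End EmpiricalDistribution.

Section ConditionalType.
Variables (R : realType) (X Y : finType) (k : X -> Y -> R).
Hypothesis k_ge0 : forall a b, 0 <= k a b.

Definition cond_type (a : X) (b : Y) : R := k a b / \sum_a' k a' b.
Definition out_type (b : Y) : R := (\sum_a k a b) / \sum_a \sum_b' k a b'.

Lemma cond_type_ge0 a b : 0 <= cond_type a b.
Proof. by rewrite divr_ge0 // sumr_ge0. Qed.

Lemma sum_cond_type_le1 b : \sum_a cond_type a b <= 1.
Proof. by rewrite -mulr_suml; have [->|/divff ->] := eqVneq (\sum_a k a b) 0; rewrite ?mul0r. Qed.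

Lemma out_type_ge0 b : 0 <= out_type b.
Proof. by rewrite divr_ge0 // !sumr_ge0 // => a _; rewrite sumr_ge0. Qed.

Lemma sum_out_type_le1 : \sum_b out_type b <= 1.
Proof.
rewrite -mulr_suml exchange_big /=.
by have [->|/divff ->] := eqVneq (\sum_a \sum_b k a b) 0; rewrite ?mul0r.
Qed.

Lemma cond_type_mul_out_type a b : \sum_a' k a' b != 0 ->
  cond_type a b * out_type b = k a b / \sum_a \sum_b' k a b'.
Proof. by move=> kb; rewrite /cond_type /out_type mulrA divfK. Qed.

End ConditionalType.

Section JointType.
Variables (R : realType) (X Y : finType) (zs : seq (X * Y)).

Definition pair_count (a : X) (b : Y) : R := (count_mem (a, b) zs)%:R.
Definition joint_type (a : X) (b : Y) : R := pair_count a b / (size zs)%:R.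

Lemma joint_type_gt0 z : z \in zs -> 0 < joint_type z.1 z.2.
Proof. by case: z => a b /= zs_ab; rewrite (emp_gt0 R zs (a, b)). Qed.

Lemma count_unzip1 a : count_mem a (unzip1 zs) = (\sum_b count_mem (a, b) zs)%N.
Proof.
elim: zs => [|[a0 b0] s IH] /=; first by rewrite big1.
rewrite big_split /= IH; congr (_ + _)%N.
rewrite (bigD1 b0) //= big1 ?addn0 => [|b /negPf nb]; first by rewrite xpair_eqE eqxx andbT.
by rewrite xpair_eqE [b0 == b]eq_sym nb andbF.
Qed.

Lemma count_unzip2 b : count_mem b (unzip2 zs) = (\sum_a count_mem (a, b) zs)%N.
Proof.
elim: zs => [|[a0 b0] s IH] /=; first by rewrite big1.
rewrite big_split /= IH; congr (_ + _)%N.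
rewrite (bigD1 a0) //= big1 ?addn0 => [|a /negPf na]; first by rewrite xpair_eqE eqxx.
by rewrite xpair_eqE [a0 == a]eq_sym na.
Qed.

Lemma sum_joint_type_r a : \sum_b joint_type a b = emp R (unzip1 zs) a.
Proof. by rewrite -mulr_suml /emp size_map count_unzip1 natr_sum. Qed.

Lemma sum_joint_type_l b : \sum_a joint_type a b = emp R (unzip2 zs) b.
Proof. by rewrite -mulr_suml /emp size_map count_unzip2 natr_sum. Qed.

Lemma sum_pair_count : \sum_a \sum_b pair_count a b = (size zs)%:R.
Proof. by rewrite pair_bigA /= -sum_count_mem; apply: eq_bigr => -[]. Qed.

Lemma out_type_pair_count : out_type pair_count = emp R (unzip2 zs).
Proof.
by apply/funext => b; rewrite /out_type sum_pair_count /emp size_map count_unzip2 natr_sum.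
Qed.

Lemma cond_type_mul_emp z : z \in zs ->
  cond_type pair_count z.1 z.2 * emp R (unzip2 zs) z.2 = joint_type z.1 z.2.
Proof.
move=> zz; rewrite -out_type_pair_count cond_type_mul_out_type ?sum_pair_count //.
rewrite -natr_sum -count_unzip2 pnatr_eq0 -lt0n -has_count has_pred1.
exact: map_f.
Qed.

Lemma sum_ln_joint_type : (0 < size zs)%N ->
  \sum_(z <- zs) (ln (joint_type z.1 z.2) - ln (emp R (unzip1 zs) z.1)
                  - ln (emp R (unzip2 zs) z.2))
  = (size zs)%:R * mutinf joint_type.
Proof.
move=> zs0; rewrite big_seq_count_mem /mutinf mulr_sumr.
under [RHS]eq_bigr do rewrite mulr_sumr.
rewrite pair_bigA /=; apply: eq_bigr => -[a b] _ /=.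
rewrite sum_joint_type_r sum_joint_type_l.
have [c0|c0] := posnP (count_mem (a, b) zs).
  by rewrite /joint_type /pair_count c0 !mul0r eqxx mulr0.
have ab : (a, b) \in zs by rewrite -has_pred1 has_count.
have J0 : 0 < joint_type a b := joint_type_gt0 ab.
have eX : 0 < emp R (unzip1 zs) a by rewrite emp_gt0 (map_f fst ab).
have eY : 0 < emp R (unzip2 zs) b by rewrite emp_gt0 (map_f snd ab).
rewrite gt_eqF // ln_div ?posrE ?(mulr_gt0 eX eY) // lnM ?posrE // mulrA [_ * joint_type a b]mulrC.
by rewrite /joint_type divfK ?pnatr_eq0 -?lt0n //; ring.
Qed.

(* [ln J - ln (p q)] splits into the mutual information, the divergence of the
   [Y]-marginal from [q] and the nonnegative divergence of the [X]-marginal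
   from [p]. *)
Lemma prod_le_joint_type (p : X -> R) (q : Y -> R) :
  (0 < size zs)%N -> (forall a, 0 <= p a) -> \sum_a p a <= 1 ->
  (forall z, z \in zs -> 0 < p z.1 /\ 0 < q z.2) ->
  \prod_(z <- zs) (p z.1 * q z.2) <=
  expR (- ((size zs)%:R * (mutinf joint_type + relent (emp R (unzip2 zs)) q))) *
  \prod_(z <- zs) joint_type z.1 z.2.
Proof.
move=> zs0 p0 p1 pq_pos.
have pq_gt0 z : z \in zs -> 0 < p z.1 * q z.2 by move/pq_pos => [pz qz]; rewrite mulr_gt0.
rewrite (prod_expR_ln pq_gt0) (prod_expR_ln (@joint_type_gt0)).
rewrite -expRD ler_expR.
pose eX := emp R (unzip1 zs); pose eY := emp R (unzip2 zs).
have -> : \sum_(z <- zs) ln (joint_type z.1 z.2) =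
    \sum_(z <- zs) ln (p z.1 * q z.2)
    + (\sum_(z <- zs) (ln (joint_type z.1 z.2) - ln (eX z.1) - ln (eY z.2))
    + \sum_(z <- zs) (ln (eY z.2) - ln (q z.2)) + \sum_(z <- zs) (ln (eX z.1) - ln (p z.1))).
  rewrite -!big_split; apply: eq_big_seq => z /pq_pos [pz qz] /=.
  by rewrite lnM ?posrE //; ring.
rewrite sum_ln_joint_type //.
rewrite -(big_map snd xpredT (fun b => ln (eY b) - ln (q b))) sum_ln_emp; last first.
  by move=> b /mapP [z /pq_pos [_ qz] ->].
rewrite -(big_map fst xpredT (fun a => ln (eX a) - ln (p a))) sum_ln_emp; last first.
  by move=> a /mapP [z /pq_pos [pz _] ->].
have re0 : 0 <= relent eX p.
  apply: relent_ge0 => [a|//|a|]; first exact: emp_ge0.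
    by rewrite emp_gt0 => /mapP [z /pq_pos [pz _] ->].
  by rewrite sum_emp ?size_map.
rewrite !size_map; have := mulr_ge0 (ler0n R (size zs)) re0; lra.
Qed.

Lemma prod_le_cond_type (p : X -> R) :
  (0 < size zs)%N -> (forall a, 0 <= p a) -> \sum_a p a <= 1 ->
  \prod_(z <- zs) p z.1 <=
  expR (- ((size zs)%:R * mutinf joint_type)) * \prod_(z <- zs) cond_type pair_count z.1 z.2.
Proof.
move=> zs0 p0 p1.
have [/allP p_pos|] := boolP (all (fun z => 0 < p z.1) zs); last first.
  by move/prod_eq0 => -> //; rewrite mulr_ge0 ?expR_ge0 ?prodr_ge0 // => *; rewrite cond_type_ge0.
pose eY := emp R (unzip2 zs).
have eY_pos : 0 < \prod_(z <- zs) eY z.2.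
  by rewrite big_seq prodr_gt0 // => z zz; rewrite emp_gt0 map_f.
rewrite -(ler_pM2r eY_pos) -mulrA -!big_split /=.
apply: le_trans (prod_le_joint_type (q := eY) zs0 p0 p1 _) _.
  by move=> z zz; split; [exact: p_pos | rewrite emp_gt0 map_f].
by rewrite relent_id addr0 (eq_big_seq _ cond_type_mul_emp).
Qed.

Lemma prod_le_out_type (p : X -> R) (q : Y -> R) (r : R) :
  (0 < size zs)%N -> (forall a, 0 <= p a) -> \sum_a p a <= 1 -> (forall b, 0 <= q b) ->
  (r%:E <= (size zs)%:R%:E * KL (emp R (unzip2 zs)) q)%E ->
  \prod_(z <- zs) (p z.1 * q z.2) <=
  expR (- ((size zs)%:R * mutinf joint_type + r)) *
  \prod_(z <- zs) (cond_type pair_count z.1 z.2 * out_type pair_count z.2).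
Proof.
move=> zs0 p0 p1 q0 r_le.
have [/allP pq_gt0|] := boolP (all (fun z => 0 < p z.1 * q z.2) zs); last first.
  move/prod_eq0 => -> // => [|z]; last exact: mulr_ge0.
  rewrite mulr_ge0 ?expR_ge0 // prodr_ge0 // => z _.
  by rewrite mulr_ge0 ?cond_type_ge0 ?out_type_ge0.
have pq_pos z : z \in zs -> 0 < p z.1 /\ 0 < q z.2.
  move/pq_gt0; rewrite !lt_def p0 q0 !andbT mulf_eq0 negb_or.
  by case/andP=> /andP [].
have KL_eq : KL (emp R (unzip2 zs)) q = (relent (emp R (unzip2 zs)) q)%:E.
  by apply: KL_relent => b; rewrite emp_gt0 => /mapP [z /pq_pos [_ qz] ->]; rewrite gt_eqF.
rewrite KL_eq -EFinM lee_fin in r_le.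
rewrite out_type_pair_count (eq_big_seq _ cond_type_mul_emp).
apply: le_trans (prod_le_joint_type zs0 p0 p1 pq_pos) _.
apply: ler_wpM2r; first by rewrite big_seq prodr_ge0 // => z /joint_type_gt0/ltW.
by rewrite ler_expR mulrDr; lra.
Qed.

End JointType.

Section ProductKernel.
Variables (R : realType) (X Y : finType) (M N T : nat) (m : 'I_M).

Lemma sum_ffun_prod_le1 (I J : finType) (F : I -> J -> R) :
  (forall i j, 0 <= F i j) -> (forall i, \sum_j F i j <= 1) ->
  \sum_(f : {ffun I -> J}) \prod_i F i (f i) <= 1.
Proof.
move=> F0 F1; rewrite -bigA_distr_bigA /=.
by apply: prodr_ile1 => i _; rewrite F1 andbT sumr_ge0.
Qed.

Definition kernel_weight (F : 'I_M -> 'I_N -> X -> {ffun 'I_T -> Y} -> R)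
    (G : 'I_T -> {ffun 'I_N -> X} -> Y -> R)
    (c : {ffun 'I_M -> {ffun 'I_N -> X}}) (y : {ffun 'I_T -> Y}) : R :=
  (\prod_m0 \prod_j F m0 j (c m0 j) y) * \prod_t G t (c m) (y t).

Variables (F : 'I_M -> 'I_N -> X -> {ffun 'I_T -> Y} -> R)
  (G : 'I_T -> {ffun 'I_N -> X} -> Y -> R) (Fm : 'I_N -> X -> R).
Hypothesis F_ge0 : forall m0 j a y, 0 <= F m0 j a y.
Hypothesis sum_F_le1 : forall m0 j y, \sum_a F m0 j a y <= 1.
Hypothesis G_ge0 : forall t u b, 0 <= G t u b.
Hypothesis sum_G_le1 : forall t u, \sum_b G t u b <= 1.
Hypothesis Fm_ge0 : forall j a, 0 <= Fm j a.
Hypothesis sum_Fm_le1 : forall j, \sum_a Fm j a <= 1.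
Hypothesis F_mE : forall j a y, F m j a y = Fm j a.

Lemma kernel_weight_ge0 c y : 0 <= kernel_weight F G c y.
Proof. by rewrite mulr_ge0 ?prodr_ge0 // => *; rewrite prodr_ge0. Qed.

(* For fixed outputs every codeword other than [m] contributes a factor at most
   [1]; the outputs, which depend on the codewords only through [c m], are then
   summed before [c m]. *)
Lemma sum_kernel_weight_le1 :
  \sum_(c : {ffun 'I_M -> {ffun 'I_N -> X}}) \sum_(y : {ffun 'I_T -> Y})
    kernel_weight F G c y <= 1.
Proof.
rewrite exchange_big /=.
pose H m0 (u : {ffun 'I_N -> X}) (y : {ffun 'I_T -> Y}) :=
  (\prod_j F m0 j (u j) y) * (if m0 == m then \prod_t G t u (y t) else 1).
have H_ge0 m0 u y : 0 <= H m0 u y.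
  by rewrite mulr_ge0 ?prodr_ge0 //; case: eqP => // _; rewrite prodr_ge0.
have weightE y c : kernel_weight F G c y = \prod_m0 H m0 (c m0) y.
  rewrite /H big_split /=; congr (_ * _).
  by rewrite [RHS](bigD1 m) //= eqxx [X in _ = _ * X]big1 ?mulr1 // => m0 /negPf ->.
under eq_bigr => y _ do
  rewrite (eq_bigr _ (fun c _ => weightE y c)) -(bigA_distr_bigA (fun m0 u => H m0 u y)) /=.
apply: (@le_trans _ _ (\sum_y \sum_u H m u y)).
  apply: ler_sum => y _; rewrite (bigD1 m) //= -[leRHS]mulr1 ler_wpM2l ?sumr_ge0 //.
  apply: prodr_ile1 => m0 /negPf m0m; rewrite sumr_ge0 //=.
  under eq_bigr do rewrite /H m0m mulr1.
  exact: (sum_ffun_prod_le1 (F := fun j a => F m0 j a y)).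
rewrite exchange_big /= /H eqxx.
under eq_bigr => u _ do
  (under eq_bigr => y _ do (under eq_bigr => j _ do rewrite F_mE); rewrite -mulr_sumr).
apply: le_trans (sum_ffun_prod_le1 Fm_ge0 sum_Fm_le1).
apply: ler_sum => u _; rewrite -[leRHS]mulr1 ler_wpM2l ?prodr_ge0 //.
exact: (sum_ffun_prod_le1 (F := fun t b => G t u b)).
Qed.

End ProductKernel.

Lemma filter_iota_range a b K : (b <= K)%N ->
  [seq j <- iota 0 K | (a <= j < b)%N] = iota a (b - a).
Proof.
move=> bK; have [ab|ba] := leqP a b; last first.
  rewrite (_ : b - a = 0)%N; last by apply/eqP; rewrite subn_eq0 ltnW.
  by rewrite (eq_filter (a2 := pred0)) ?filter_pred0 // => j /=; apply/negbTE; lia.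
have -> : K = (a + (b - a) + (K - b))%N by lia.
rewrite !iotaD !filter_cat add0n subnKC //.
rewrite (eq_in_filter (a2 := pred0) (s := iota 0 a)); last first.
  by move=> j; rewrite mem_iota /= => ?; apply/negbTE; lia.
rewrite (eq_in_filter (a2 := pred0) (s := iota b _)); last first.
  by move=> j; rewrite mem_iota /= => ?; apply/negbTE; lia.
rewrite (eq_in_filter (a2 := predT) (s := iota a _)); last first.
  by move=> j; rewrite mem_iota /= => ?; lia.
by rewrite !filter_pred0 filter_predT cats0.
Qed.

Lemma map_val_filter_enum K (p : pred nat) :
  map val [seq j : 'I_K <- enum 'I_K | p j] = [seq j <- iota 0 K | p j].
Proof. by rewrite -val_enum_ord filter_map. Qed.

Section Window.
Variables (R : realType) (X Y : finType) (Q : X -> Y -> R) (star : X) (y0 : Y).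
Variables (P : X -> R) (N M A : nat) (t1 t2 : R) (m m' : 'I_M) (l n i : nat).
Hypotheses (i_gt0 : (0 < i)%N) (i_leN : (i <= N)%N) (i_len : (i <= n)%N)
  (n_leT : (n <= A + N - 1)%N).
Local Notation T := (A + N - 1)%N.

(* Output at the 0-based time [s], with a junk default outside [0, T). *)
Definition yat (y : outputs Y T) (s : nat) : Y := if insub s is Some t then y t else y0.

Definition window_pairs (c : codebook X M N) (y : outputs Y T) : seq (X * Y) :=
  zip (cwin c m' 0 i) (ywin y (n - i + 1) n).

Let prefix := [seq j : 'I_N <- enum 'I_N | (j < i)%N].

Lemma map_val_prefix : map val prefix = iota 0 i.
Proof.
by rewrite (map_val_filter_enum _ (fun j => j < i)%N); exact: (filter_iota_ltn 0 i_leN).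
Qed.

Lemma ywin_window (y : outputs Y T) :
  ywin y (n - i + 1) n = [seq yat y (n - i + j) | j : 'I_N <- prefix].
Proof.
have -> : ywin y (n - i + 1) n =
    map (yat y) (map val [seq t : 'I_T <- enum 'I_T | (n - i + 1 <= t.+1 <= n)%N]).
  by rewrite -map_comp; apply: eq_map => t; rewrite /yat /= valK.
rewrite (map_val_filter_enum _ (fun t => n - i + 1 <= t.+1 <= n)%N).
rewrite (eq_filter (a2 := fun t => (n - i <= t < n)%N)) => [|t]; last first.
  by apply/idP/idP => /andP [? ?]; apply/andP; split; lia.
rewrite filter_iota_range // (_ : (n - (n - i))%N = i); last lia.
by rewrite -[(n - i)%N]addn0 iotaDl addn0 -map_val_prefix -!map_comp.
Qed.

Lemma window_pairsE c y :
  window_pairs c y = [seq (c m' j, yat y (n - i + j)) | j : 'I_N <- prefix].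
Proof. by rewrite /window_pairs ywin_window /cwin zip_map. Qed.

Lemma size_window_pairs c y : size (window_pairs c y) = i.
Proof.
by rewrite window_pairsE size_map -(size_map val) map_val_prefix size_iota.
Qed.

Lemma unzip2_window_pairs c y : unzip2 (window_pairs c y) = ywin y (n - i + 1) n.
Proof. by rewrite /window_pairs unzip2_zip // ywin_window /cwin !size_map. Qed.

Lemma prod_window_pairs c y (f : X * Y -> R) :
  \prod_(z <- window_pairs c y) f z =
  \prod_(j : 'I_N | (j < i)%N) f (c m' j, yat y (n - i + j)).
Proof. by rewrite window_pairsE big_map big_filter big_enum_cond. Qed.

Lemma prod_window_outputs c y (g : Y -> R) :
  \prod_(z <- window_pairs c y) g z.2 = \prod_(t : 'I_T | (n - i <= t < n)%N) g (y t).
Proof.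
rewrite -(big_map snd xpredT g) -/(unzip2 _) unzip2_window_pairs big_map big_filter big_enum_cond.
by apply: eq_bigl => t /=; apply/idP/idP => /andP [? ?]; apply/andP; split; lia.
Qed.

Hypotheses (HQ : is_channel Q) (HP : is_distr P) (m'_neq_m : m' != m).

Local Notation type_fn := {ffun X * Y -> 'I_i.+1}.
Local Notation Ewin := (Ev (N := N) (T := T) Q star t1 t2 m' n i).

Definition type_count (k : type_fn) (a : X) (b : Y) : R := (k (a, b) : nat)%:R.

Definition window_type c y : type_fn := [ffun z => inord (count_mem z (window_pairs c y))].

Lemma type_count_window_type c y :
  type_count (window_type c y) = pair_count R (window_pairs c y).
Proof.
apply/funext => a; apply/funext => b.
by rewrite /type_count ffunE inordK // ltnS -(size_window_pairs c y) count_size.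
Qed.

Definition tilted_codeword (k : type_fn) (m0 : 'I_M) (j : 'I_N) (a : X)
    (y : outputs Y T) : R :=
  if (m0 == m') && (j < i)%N then cond_type (type_count k) a (yat y (n - i + j)) else P a.

Definition channel_kernel (t : 'I_T) (u : {ffun 'I_N -> X}) (b : Y) : R :=
  Q (if (l <= t.+1 < l + N)%N then (if insub (t.+1 - l)%N is Some o then u o else star)
     else star) b.

Definition tilted_output (k : type_fn) (t : 'I_T) (u : {ffun 'I_N -> X}) (b : Y) : R :=
  if (n - i <= t < n)%N then out_type (type_count k) b else channel_kernel t u b.

Lemma weight_kernelE c y :
  weight P Q star m l c y = kernel_weight m (fun _ _ a _ => P a) channel_kernel c y.
Proof. by []. Qed.

Let P_ge0 : forall a, 0 <= P a := HP.1.
Let sum_P_le1 : \sum_a P a <= 1. Proof. by rewrite HP.2. Qed.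
Let type_count_ge0 k a b : 0 <= type_count k a b. Proof. exact: ler0n. Qed.

Lemma tilted_codeword_ge0 k m0 j a y : 0 <= tilted_codeword k m0 j a y.
Proof. by rewrite /tilted_codeword; case: ifP; rewrite ?cond_type_ge0. Qed.

Lemma sum_tilted_codeword_le1 k m0 j y : \sum_a tilted_codeword k m0 j a y <= 1.
Proof. by rewrite /tilted_codeword; case: (_ && _); rewrite ?sum_cond_type_le1. Qed.

Lemma channel_kernel_ge0 t u b : 0 <= channel_kernel t u b.
Proof. exact: (HQ _).1. Qed.

Lemma sum_channel_kernel t u : \sum_b channel_kernel t u b = 1.
Proof. exact: (HQ _).2. Qed.

Lemma tilted_output_ge0 k t u b : 0 <= tilted_output k t u b.
Proof. by rewrite /tilted_output; case: ifP; rewrite ?out_type_ge0 ?channel_kernel_ge0. Qed.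

Lemma sum_tilted_output_le1 k t u : \sum_b tilted_output k t u b <= 1.
Proof.
rewrite /tilted_output; case: (n - i <= t < n)%N; first exact: sum_out_type_le1.
by rewrite sum_channel_kernel.
Qed.

(* Change of measure: on the event, the true weight is dominated by a sum of
   sub-probability weights indexed by the (polynomially many) joint types. *)
Lemma Pml_le_card_types (E : codebook X M N -> outputs Y T -> bool) (e : R)
    (G : type_fn -> 'I_T -> {ffun 'I_N -> X} -> Y -> R) :
  0 <= e -> (forall k t u b, 0 <= G k t u b) -> (forall k t u, \sum_b G k t u b <= 1) ->
  (forall c y, E c y ->
     weight P Q star m l c y <=
     e * \sum_(k : type_fn) kernel_weight m (tilted_codeword k) (G k) c y) ->
  Pml (N := N) (T := T) P Q star m l E <= e * #|{: type_fn}|%:R.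
Proof.
move=> e_ge0 G_ge0 sum_G_le1 weight_le.
have kw_ge0 k c y : 0 <= kernel_weight m (tilted_codeword k) (G k) c y.
  by apply: kernel_weight_ge0 => *; rewrite ?tilted_codeword_ge0.
apply: (@le_trans _ _
  (\sum_c \sum_y e * \sum_(k : type_fn) kernel_weight m (tilted_codeword k) (G k) c y)).
  apply: ler_sum => c _; rewrite big_mkcond /=; apply: ler_sum => y _.
  by case: ifP => [/weight_le //|_]; rewrite mulr_ge0 ?sumr_ge0.
under eq_bigr do rewrite -mulr_sumr.
rewrite -mulr_sumr ler_wpM2l //.
under eq_bigr do rewrite exchange_big.
rewrite exchange_big -sum1_card natr_sum ler_sum // => k _.
apply: (sum_kernel_weight_le1 (Fm := fun _ a => P a)) => //.
- exact: tilted_codeword_ge0.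
- exact: sum_tilted_codeword_le1.
- by move=> j a y; rewrite /tilted_codeword eq_sym (negPf m'_neq_m).
Qed.

Lemma Ev_window c y : Ewin c y ->
  t2 * ln M%:R <= i%:R * mutinf (joint_type R (window_pairs c y)) /\
  ((t1 * ln M%:R)%:E <=
     i%:R%:E * KL (emp R (unzip2 (window_pairs c y))) (Q star))%E.
Proof.
move=> /allP /(_ i); rewrite mem_iota i_gt0 add1n ltnSn => /(_ isT) /andP [mi kl].
by rewrite unzip2_window_pairs; split=> //; move: mi; rewrite subnn eqxx addr0 subnK.
Qed.

Lemma prefix_prod_le c y : Ewin c y ->
  \prod_(j : 'I_N | (j < i)%N) P (c m' j) <=
  expR (- (t2 * ln M%:R)) *
  \prod_(j : 'I_N | (j < i)%N)
    cond_type (type_count (window_type c y)) (c m' j) (yat y (n - i + j)).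
Proof.
case/Ev_window => mi_ge _.
rewrite type_count_window_type -(prod_window_pairs c y (fun z => P z.1)).
rewrite -(prod_window_pairs c y (fun z => cond_type _ z.1 z.2)).
apply: le_trans (prod_le_cond_type _ P_ge0 sum_P_le1) _; first by rewrite size_window_pairs.
apply: ler_wpM2r; first by rewrite prodr_ge0 // => *; rewrite cond_type_ge0.
by rewrite ler_expR size_window_pairs lerN2.
Qed.

Lemma prefix_noise_prod_le c y : Ewin c y ->
  \prod_(j : 'I_N | (j < i)%N) P (c m' j) *
  \prod_(t : 'I_T | (n - i <= t < n)%N) Q star (y t) <=
  expR (- ((t1 + t2) * ln M%:R)) *
  (\prod_(j : 'I_N | (j < i)%N)
     cond_type (type_count (window_type c y)) (c m' j) (yat y (n - i + j)) *
   \prod_(t : 'I_T | (n - i <= t < n)%N) out_type (type_count (window_type c y)) (y t)).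
Proof.
case/Ev_window => mi_ge kl_ge.
rewrite type_count_window_type -(prod_window_pairs c y (fun z => P z.1)).
rewrite -(prod_window_pairs c y (fun z => cond_type _ z.1 z.2)).
rewrite -(prod_window_outputs c y (Q star)) -(prod_window_outputs c y (out_type _)).
rewrite -!big_split /=.
rewrite -(size_window_pairs c y) in kl_ge.
apply: le_trans (prod_le_out_type _ P_ge0 sum_P_le1 (HQ star).1 kl_ge) _.
  by rewrite size_window_pairs.
apply: ler_wpM2r.
  by rewrite prodr_ge0 // => *; rewrite mulr_ge0 ?cond_type_ge0 ?out_type_ge0.
by rewrite ler_expR size_window_pairs mulrDl; lra.
Qed.

Lemma prod_codebook_split (F : 'I_M -> 'I_N -> R) :
  \prod_m0 \prod_j F m0 j =
  \prod_(j : 'I_N | (j < i)%N) F m' j *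
  (\prod_(j : 'I_N | ~~ (j < i)%N) F m' j * \prod_(m0 | m0 != m') \prod_j F m0 j).
Proof. by rewrite (bigD1 m') //= (bigID (fun j : 'I_N => (j < i)%N)) /= mulrA. Qed.

Lemma prod_tilted_codeword k c y :
  \prod_m0 \prod_j tilted_codeword k m0 j (c m0 j) y =
  \prod_(j : 'I_N | (j < i)%N) cond_type (type_count k) (c m' j) (yat y (n - i + j)) *
  (\prod_(j : 'I_N | ~~ (j < i)%N) P (c m' j) * \prod_(m0 | m0 != m') \prod_j P (c m0 j)).
Proof.
rewrite (prod_codebook_split (fun m0 j => tilted_codeword k m0 j (c m0 j) y)).
congr (_ * (_ * _)).
- by apply: eq_bigr => j ji; rewrite /tilted_codeword eqxx ji.
- by apply: eq_bigr => j /negPf ji; rewrite /tilted_codeword eqxx ji.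
- by apply: eq_bigr => m0 /negPf m0m'; apply: eq_bigr => j _; rewrite /tilted_codeword m0m'.
Qed.

Lemma weight_le_tilted c y : Ewin c y ->
  weight P Q star m l c y <=
  expR (- (t2 * ln M%:R)) *
  \sum_(k : type_fn) kernel_weight m (tilted_codeword k) channel_kernel c y.
Proof.
move=> ev; set k0 := window_type c y.
apply: (@le_trans _ _
  (expR (- (t2 * ln M%:R)) * kernel_weight m (tilted_codeword k0) channel_kernel c y)).
  rewrite weight_kernelE /kernel_weight prod_tilted_codeword.
  rewrite (prod_codebook_split (fun m0 j => P (c m0 j))) !mulrA.
  do 3 (apply: ler_wpM2r;
        first by apply: prodr_ge0 => *; rewrite ?prodr_ge0 ?channel_kernel_ge0).
  exact: prefix_prod_le.
apply: ler_wpM2l; first exact: expR_ge0.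
rewrite (bigD1 k0) //= lerDl sumr_ge0 // => k _.
by apply: kernel_weight_ge0 => *; rewrite ?tilted_codeword_ge0 ?channel_kernel_ge0.
Qed.

Lemma card_type_fn : #|{: type_fn}| = (i.+1 ^ #|{: X * Y}|)%N.
Proof. by rewrite card_ffun card_ord. Qed.

Lemma Pml_Ev_le :
  Pml (N := N) (T := T) P Q star m l Ewin <= expR (- (t2 * ln M%:R)) * (i.+1 ^ #|{: X * Y}|)%:R.
Proof.
rewrite -card_type_fn; apply: (Pml_le_card_types (G := fun _ => channel_kernel)).
- exact: expR_ge0.
- by move=> *; rewrite channel_kernel_ge0.
- by move=> *; rewrite sum_channel_kernel.
- exact: weight_le_tilted.
Qed.

Section Noise.
Hypothesis window_noise : forall t : 'I_T, (n - i <= t < n)%N -> ~~ (l <= t.+1 < l + N)%N.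

Lemma weight_le_tilted_noise c y : Ewin c y ->
  weight P Q star m l c y <=
  expR (- ((t1 + t2) * ln M%:R)) *
  \sum_(k : type_fn) kernel_weight m (tilted_codeword k) (tilted_output k) c y.
Proof.
move=> ev; set k0 := window_type c y; set win := fun t : 'I_T => (n - i <= t < n)%N.
apply: (@le_trans _ _ (expR (- ((t1 + t2) * ln M%:R)) *
  kernel_weight m (tilted_codeword k0) (tilted_output k0) c y)).
  rewrite weight_kernelE /kernel_weight prod_tilted_codeword.
  rewrite (prod_codebook_split (fun m0 j => P (c m0 j))).
  rewrite (bigID win) [X in _ <= _ * (_ * X)](bigID win) /=.
  have -> : \prod_(t | win t) channel_kernel t (c m) (y t) = \prod_(t | win t) Q star (y t).
    by apply: eq_bigr => t /window_noise wt; rewrite /channel_kernel (negPf wt).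
  have -> : \prod_(t | win t) tilted_output k0 t (c m) (y t) =
            \prod_(t | win t) out_type (type_count k0) (y t).
    by apply: eq_bigr => t; rewrite /tilted_output /win => ->.
  have -> : \prod_(t | ~~ win t) tilted_output k0 t (c m) (y t) =
            \prod_(t | ~~ win t) channel_kernel t (c m) (y t).
    by apply: eq_bigr => t; rewrite /tilted_output /win => /negPf ->.
  rewrite mulrACA [X in _ <= _ * X]mulrACA [X in _ <= X]mulrA.
  apply: ler_wpM2r; last exact: prefix_noise_prod_le.
  by rewrite !mulr_ge0 ?prodr_ge0 // => *; rewrite ?prodr_ge0 ?channel_kernel_ge0.
apply: ler_wpM2l; first exact: expR_ge0.
rewrite (bigD1 k0) //= lerDl sumr_ge0 // => k _.
by apply: kernel_weight_ge0 => *; rewrite ?tilted_codeword_ge0 ?tilted_output_ge0.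
Qed.

Lemma Pml_Ev_le_noise :
  Pml (N := N) (T := T) P Q star m l Ewin <=
  expR (- ((t1 + t2) * ln M%:R)) * (i.+1 ^ #|{: X * Y}|)%:R.
Proof.
rewrite -card_type_fn; apply: (Pml_le_card_types (G := tilted_output)).
- exact: expR_ge0.
- exact: tilted_output_ge0.
- exact: sum_tilted_output_le1.
- exact: weight_le_tilted_noise.
Qed.

End Noise.

End Window.

Lemma sum_nat_indicator_le (R : realType) (a B l w : nat) :
  \sum_(a <= n < B) ((l <= n < l + w)%N)%:R <= w%:R :> R.
Proof.
have -> : \sum_(a <= n < B) ((l <= n < l + w)%N)%:R =
          (count (fun n => l <= n < l + w)%N (index_iota a B))%:R :> R.
  by elim: (index_iota a B) => [|x s IH]; rewrite ?big_nil // big_cons IH natrD.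
rewrite ler_nat -size_filter -[w in (_ <= w)%N](size_iota l).
apply: uniq_leq_size; first by rewrite filter_uniq ?iota_uniq.
by move=> n; rewrite mem_filter mem_iota => /andP [].
Qed.

Lemma natr_mul_expR_ln (R : realType) (M : nat) (t : R) : (0 < M)%N ->
  M%:R * expR (- (t * ln M%:R)) = M%:R `^ (- (t - 1)).
Proof.
move=> M0; rewrite /powR gt_eqF ?ltr0n // -[X in X * _]lnK ?posrE ?ltr0n // -expRD.
by congr expR; ring.
Qed.

Section ErrorSum.
Variables (R : realType) (X Y : finType) (Q : X -> Y -> R) (star : X) (y0 : Y).
Variables (P : X -> R) (N M A : nat) (t1 t2 : R) (m : 'I_M) (l : nat).
Hypotheses (HQ : is_channel Q) (HP : is_distr P).
Local Notation T := (A + N - 1)%N.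
Let e12 := expR (- ((t1 + t2) * ln M%:R)).
Let e2 := expR (- (t2 * ln M%:R)).
Let K : R := (N.+1 ^ #|{: X * Y}|)%:R.

(* Only windows ending in [l, l + 2N) can overlap the transmission. *)
Lemma Pml_Ev_le_window m' n i : m' != m -> (1 <= n < A + N)%N -> (1 <= i <= minn N n)%N ->
  Pml (N := N) (T := T) P Q star m l (Ev (N := N) (T := T) Q star t1 t2 m' n i) <=
  K * (e12 + e2 * ((l <= n < l + 2 * N)%N)%:R).
Proof.
move=> m'm /andP [n_gt0 n_lt] /andP [i_gt0]; rewrite leq_min => /andP [i_leN i_len].
have n_leT : (n <= T)%N by lia.
have XY_gt0 : (0 < #|{: X * Y}|)%N by apply/card_gt0P; exists (star, y0).
have K_ge : (i.+1 ^ #|{: X * Y}|)%:R <= K by rewrite ler_nat leq_exp2r.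
have [near|far] := boolP (l <= n < l + 2 * N)%N.
  apply: le_trans (Pml_Ev_le star y0 t1 t2 l i_gt0 i_leN i_len n_leT HQ HP m'm) _.
  rewrite mulr1 mulrC mulrDr ler_wpDl ?mulr_ge0 ?expR_ge0 //.
  by apply: ler_wpM2r; rewrite ?expR_ge0.
have noise t : (n - i <= t < n)%N -> ~~ (l <= t.+1 < l + N)%N.
  move: far; rewrite negb_and -ltnNge -leqNgt => far /andP [? ?]; apply/negP => /andP [? ?].
  case/orP: far => ?; lia.
apply: le_trans (Pml_Ev_le_noise star y0 t1 t2 i_gt0 i_leN i_len n_leT HQ HP m'm noise) _.
by rewrite mulr0 addr0 mulrC; apply: ler_wpM2r; rewrite ?expR_ge0.
Qed.

Lemma sum_Pml_Ev_le :
  \sum_(m' : 'I_M | m' != m) \sum_(1 <= n < A + N) \sum_(1 <= i < (minn N n).+1)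
    Pml (N := N) (T := T) P Q star m l (Ev (N := N) (T := T) Q star t1 t2 m' n i)
  <= M%:R * (N%:R * K * ((A + N)%:R * e12 + (2 * N)%:R * e2)).
Proof.
have K_ge0 : 0 <= K by rewrite ler0n.
pose W n : R := ((l <= n < l + 2 * N)%N)%:R.
have inner m' n : m' != m -> (1 <= n < A + N)%N ->
    \sum_(1 <= i < (minn N n).+1)
      Pml (N := N) (T := T) P Q star m l (Ev (N := N) (T := T) Q star t1 t2 m' n i)
    <= N%:R * (K * (e12 + e2 * W n)).
  move=> m'm n_range.
  apply: le_trans (_ : _ <= \sum_(1 <= i < (minn N n).+1) K * (e12 + e2 * W n)) _.
    by apply: ler_sum_nat => i; rewrite ltnS => /(Pml_Ev_le_window m'm n_range).
  rewrite sumr_const_nat subn1 /= -[leLHS]mulr_natl.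
  apply: ler_wpM2r; last by rewrite ler_nat geq_minl.
  by rewrite mulr_ge0 ?addr_ge0 ?mulr_ge0 ?expR_ge0.
apply: le_trans
  (_ : _ <= \sum_(m' : 'I_M | m' != m) N%:R * K * ((A + N)%:R * e12 + (2 * N)%:R * e2)) _.
  apply: ler_sum => m' m'm; apply: le_trans (ler_sum_nat (fun n => inner m' n m'm)) _.
  rewrite -mulr_sumr -mulr_sumr -mulrA; apply: ler_wpM2l => //; apply: ler_wpM2l => //.
  rewrite big_split /= sumr_const_nat -mulr_sumr; apply: lerD.
    by rewrite -[leLHS]mulr_natl; apply: ler_wpM2r; rewrite ?expR_ge0 // ler_nat; lia.
  by rewrite mulrC; apply: ler_wpM2r; rewrite ?expR_ge0 // sum_nat_indicator_le.
rewrite sumr_const -[leLHS]mulr_natl; apply: ler_wpM2r.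
  by rewrite !mulr_ge0 ?addr_ge0 ?mulr_ge0 ?expR_ge0.
by rewrite ler_nat -[X in (_ <= X)%N]card_ord max_card.
Qed.

End ErrorSum.

Lemma error_bound_arith (R : realType) (M N A d : nat) (t1 t2 : R) :
  (0 < M)%N -> (0 < N)%N -> (1 <= A)%N ->
  M%:R * (N%:R * (N.+1 ^ d)%:R *
          ((A + N)%:R * expR (- ((t1 + t2) * ln M%:R)) + (2 * N)%:R * expR (- (t2 * ln M%:R))))
  <= (M%:R `^ (- (t1 + t2 - 1)) * A%:R + M%:R `^ (- (t2 - 1))) *
     ((2 ^ (d + 1))%:R * N%:R ^+ (d + 2)).
Proof.
move=> M0 N0 A1.
have a_ge0 : 0 <= M%:R `^ (- (t1 + t2 - 1)) :> R by apply: powR_ge0.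
rewrite mulrCA mulrDr !mulrA ![M%:R * _]mulrC -!mulrA !natr_mul_expR_ln //.
have K_le : (N.+1 ^ d)%:R <= (2 ^ d)%:R * N%:R ^+ d :> R.
  by rewrite -natrX -natrM -expnMn !natrX lerXn2r ?nnegrE ?ler0n // ler_nat; lia.
have AN_le : (A + N)%:R <= (2 * N * A)%:R :> R by rewrite ler_nat; nia.
apply: le_trans (_ : _ <= N%:R * ((2 ^ d)%:R * N%:R ^+ d *
    ((2 * N * A)%:R * M%:R `^ (- (t1 + t2 - 1)) + (2 * N)%:R * M%:R `^ (- (t2 - 1))))) _.
  apply: ler_wpM2l => //; apply: ler_pM; rewrite ?addr_ge0 ?mulr_ge0 ?powR_ge0 //.
  by apply: lerD => //; apply: ler_wpM2r.
by rewrite le_eqVlt; apply/orP; left; apply/eqP; rewrite !natrM !natrX !exprD; ring.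
Qed.

Theorem lemma2 (R : realType) (X Y : finType) (Q : X -> Y -> R) (star : X) :
  is_channel Q ->
  exists (C : R) (d : nat),
  forall (P : X -> R) (N M A : nat) (t1 t2 : R) (m : 'I_M) (l : nat),
    is_distr P -> (0 < N)%N -> (1 <= A)%N -> (1 <= l <= A)%N ->
    \sum_(m' : 'I_M | m' != m) \sum_(1 <= n < A + N)
      \sum_(1 <= i < (minn N n).+1)
        Pml (N := N) (T := (A + N - 1)%N) P Q star m l
            (Ev (N := N) (T := (A + N - 1)%N) Q star t1 t2 m' n i)
    <= ((M%:R `^ (- (t1 + t2 - 1))) * A%:R + M%:R `^ (- (t2 - 1)))
       * (C * (N%:R) ^+ d).
Proof.
move=> HQ.
have y0 : Y.
  case: (pickP (@predT Y)) => [y _ //|Y_empty]; exfalso.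
  by have := (HQ star).2; rewrite big_pred0 // => /esym/eqP; rewrite oner_eq0.
exists (2 ^ (#|{: X * Y}| + 1))%:R, (#|{: X * Y}| + 2)%N.
move=> P N M A t1 t2 m l HP N_gt0 A_ge1 _.
have M_gt0 : (0 < M)%N by case: m => m' /=; lia.
apply: le_trans (sum_Pml_Ev_le star y0 N A t1 t2 m l HQ HP) _.
exact: error_bound_arith.
Qed.
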